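(* Let $\lambda\ge0$, $\delta>0$, and let $\rho_c$ ($c>0$) be as in the context. Let $0<a<b$. Then for all $s<u<t$ and $x<z<y$, $$\rho_b(s,x,u,z)\rho_a(u,z,t,y)\le D\Big[\rho_{b-a}(s,x,u,z)\vee\rho_a(u,z,t,y)\Big]\rho_a(s,x,t,y),$$ with $D=\left(\frac{b}{b-a}\right)^{3/2}\exp\left[\frac32\, l\!\left(\frac{a}{b-a}\right)\right]$, where $$l(\alpha)=\max_{\tau\ge\alpha\vee1/\alpha}\left[\ln(1+\tau)-\frac{\tau-\alpha}{1+\tau}\ln(\alpha\tau)\right].$$
   Context: For $t>0$, $z\in\mathbb{R}$ let $p(t,z)=(4\pi)^{-1/2}\delta t z^{-3/2}\exp\{-(\delta t-2\sqrt{\lambda}z)^2/(4z)\}\mathbf 1_{z>0}$. For $c>0$ put $\rho_c(s,x,t,y)=c\,p(c(t-s),c(y-x))$ if $s<t$, and $0$ otherwise. *)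

From HB Require Import structures.
From mathcomp Require Import all_boot all_order all_algebra.
From mathcomp Require Import all_classical all_reals all_analysis.
Set Implicit Arguments. Unset Strict Implicit. Unset Printing Implicit Defensive.
Import Order.TTheory GRing.Theory Num.Theory.
Local Open Scope ring_scope.
Local Open Scope classical_set_scope.

Section Defs.
Variable R : realType.

Definition p_dens (lam delta t z : R) : R :=
  if 0 < z then
    powR (4 * pi) (- (1/2)) * delta * t * powR z (- (3/2)) *
    expR (- ((delta * t - 2 * Num.sqrt lam * z) ^+ 2 / (4 * z)))
  else 0.

Definition rho (lam delta c s x t y : R) : R :=
  if s < t then c * p_dens lam delta (c * (t - s)) (c * (y - x)) else 0.

Definition lfun (alpha : R) : R :=
  sup [set v | exists tau : R, Num.max alpha alpha^-1 <= tau /\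
        v = ln (1 + tau) - (tau - alpha) / (1 + tau) * ln (alpha * tau)].

Definition Dconst (a b : R) : R :=
  powR (b / (b - a)) (3/2) * expR (3/2 * lfun (a / (b - a))).

End Defs.

From HB Require Import structures.
From mathcomp Require Import all_boot all_order all_algebra.
From mathcomp Require Import all_classical all_reals all_analysis.
From mathcomp Require Import ring lra.
Set Implicit Arguments. Unset Strict Implicit. Unset Printing Implicit Defensive.
Import Order.TTheory GRing.Theory Num.Theory.
Local Open Scope ring_scope.

(* Taking logarithms, ln rho_c(s,x,t,y) = K + (ln c)/2 + ln h - (3/2) ln X - c q(h,X)
   with h = t - s, X = y - x and q(h,X) = (delta h - 2 sqrt(lam) X)^2 / (4X).  Let h, k
   and X, Y be the increments over [s,u], [u,t] and [x,z], [z,y].  It suffices that one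
   of the two log-ratios
     ln (rho_b(s,x,u,z) rho_a(u,z,t,y) / (rho_(b-a)(s,x,u,z) rho_a(s,x,t,y))),
     ln (rho_b(s,x,u,z) / rho_a(s,x,t,y))
   is at most ln D.  If (b-a) X <= a Y, the first one is: q is subadditive (Engel's form
   of Cauchy-Schwarz) and (X+Y)/Y <= b/(b-a).  Otherwise their convex combination with
   weight w = bY / ((b-a)(X+Y)) is: its quadratic terms combine, again by Engel's
   inequality, into a nonpositive quantity, and its logarithmic terms are bounded by
   concavity of ln. *)

Section Elementary.
Variable R : realType.
Implicit Types u v p q w : R.

Lemma ln_convex_comb w p q : 0 <= w -> w <= 1 -> 0 < p -> 0 < q ->
  w * ln p + (1 - w) * ln q <= ln (w * p + (1 - w) * q).
Proof. by move=> w0 w1 p0 q0; have := concave_ln (Itv01 w0 w1) p0 q0; rewrite !convRE. Qed.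

Lemma sqrD_div_le u v p q : 0 < p -> 0 < q ->
  (u + v) ^+ 2 / (p + q) <= u ^+ 2 / p + v ^+ 2 / q.
Proof.
move=> p0 q0; rewrite -subr_ge0.
have -> : u ^+ 2 / p + v ^+ 2 / q - (u + v) ^+ 2 / (p + q)
          = (q * u - p * v) ^+ 2 / (p * q * (p + q)).
  by field; rewrite !gt_eqF ?addr_gt0.
by rewrite divr_ge0 ?sqr_ge0 // ltW // !mulr_gt0 ?addr_gt0.
Qed.

Lemma expr3_subr_le (m b : R) : 0 <= m -> 2 * m <= b ->
  (2 * b - m) ^+ 3 * m ^+ 2 <= b ^+ 5.
Proof.
move=> m0 mb; set e := b - 2 * m.
have e0 : 0 <= e by rewrite /e subr_ge0.
have -> : b = 2 * m + e by rewrite /e; ring.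
rewrite -subr_ge0.
have -> : (2 * m + e) ^+ 5 - (2 * (2 * m + e) - m) ^+ 3 * m ^+ 2 =
  5 * m ^+ 5 + 26 * m ^+ 4 * e + 44 * m ^+ 3 * e ^+ 2 + 32 * m ^+ 2 * e ^+ 3
  + 10 * m * e ^+ 4 + e ^+ 5 by ring.
by rewrite !addr_ge0 ?mulr_ge0 ?exprn_ge0 ?ler0n.
Qed.

Lemma le_mul_of_ln_sub (p q c : R) : 0 < p -> 0 < q -> 0 < c ->
  ln p - ln q <= ln c -> p <= c * q.
Proof. by move=> p0 q0 c0 le; rewrite -ler_ln ?posrE ?mulr_gt0 // lnM ?posrE //; lra. Qed.

End Elementary.

Section Density.
Variables (R : realType) (lam delta : R).
Hypothesis delta_gt0 : 0 < delta.

Definition p_exponent (h X : R) := (delta * h - 2 * Num.sqrt lam * X) ^+ 2 / (4 * X).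

Definition lrho (c h X : R) :=
  ln c / 2 + ln h - 3/2 * ln X - c * p_exponent h X.

Lemma rho_gt0 (c s x t y : R) : 0 < c -> s < t -> x < y ->
  0 < rho lam delta c s x t y.
Proof.
move=> c0 st xy; have cX0 : 0 < c * (y - x) by rewrite mulr_gt0 // subr_gt0.
rewrite /rho st /p_dens cX0 !mulr_gt0 ?powR_gt0 ?expR_gt0 ?subr_gt0 //.
by rewrite mulr_gt0 // pi_gt0.
Qed.

Lemma ln_rho (c s x t y : R) : 0 < c -> s < t -> x < y ->
  ln (rho lam delta c s x t y) =
  ln (powR (4 * pi) (- (1/2)) * delta) + lrho c (t - s) (y - x).
Proof.
move=> c0 st xy; rewrite /rho st /p_dens /lrho /p_exponent.
have h0 : 0 < t - s by rewrite subr_gt0.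
have X0 : 0 < y - x by rewrite subr_gt0.
have cX0 : 0 < c * (y - x) by rewrite mulr_gt0.
have pi4 : 0 < 4 * pi :> R by rewrite mulr_gt0 // pi_gt0.
set P := powR (4 * pi) _.
rewrite cX0 !lnM ?posrE ?mulr_gt0 ?powR_gt0 ?expR_gt0 //.
rewrite expRK ln_powR !lnM ?posrE //.
by field; rewrite !gt_eqF.
Qed.

Lemma p_exponent_subadd (h k X Y : R) : 0 < X -> 0 < Y ->
  p_exponent (h + k) (X + Y) <= p_exponent h X + p_exponent k Y.
Proof.
move=> X0 Y0; rewrite /p_exponent.
have -> : delta * (h + k) - 2 * Num.sqrt lam * (X + Y)
          = (delta * h - 2 * Num.sqrt lam * X) + (delta * k - 2 * Num.sqrt lam * Y).
  by ring.
by rewrite mulrDr; apply: sqrD_div_le; rewrite mulr_gt0.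
Qed.

Lemma p_exponent_weighted (a b h k X Y : R) : 0 < a -> a < b -> 0 < X -> 0 < Y ->
  a * (X + Y) * p_exponent (h + k) (X + Y)
  <= b * X * p_exponent h X + a * b / (b - a) * Y * p_exponent k Y.
Proof.
move=> a0 ab X0 Y0; have b0 : 0 < b := lt_trans a0 ab.
rewrite /p_exponent.
set u := delta * h - 2 * Num.sqrt lam * X.
set v := delta * k - 2 * Num.sqrt lam * Y.
have -> : delta * (h + k) - 2 * Num.sqrt lam * (X + Y) = u + v by rewrite /u /v; ring.
have := @sqrD_div_le R u v (b^-1) (a^-1 - b^-1).
rewrite invr_gt0 b0 subr_gt0 ltf_pV2 ?posrE // => /(_ isT ab).
have -> : b^-1 + (a^-1 - b^-1) = a^-1 by ring.
have -> : a * (X + Y) * ((u + v) ^+ 2 / (4 * (X + Y))) = (u + v) ^+ 2 / a^-1 / 4.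
  by field; rewrite !gt_eqF ?addr_gt0.
have -> : b * X * (u ^+ 2 / (4 * X)) + a * b / (b - a) * Y * (v ^+ 2 / (4 * Y))
          = (u ^+ 2 / b^-1 + v ^+ 2 / (a^-1 - b^-1)) / 4.
  by field; rewrite mulN1r !gt_eqF ?subr_gt0.
by move=> le; rewrite ler_pM2r.
Qed.

End Density.

Section Constant.
Variable R : realType.

Lemma lfun_term_le (al tau : R) : 0 < al -> Num.max al al^-1 <= tau ->
  ln (1 + tau) - (tau - al) / (1 + tau) * ln (al * tau)
  <= ln (1 + al^-1) + al * (1 + al).
Proof.
move=> al0; rewrite ge_max => /andP[al_tau ial_tau].
have tau0 : 0 < tau by apply: lt_le_trans ial_tau; rewrite invr_gt0.
have al_tau1 : 1 <= al * tau by rewrite -(mulfV (lt0r_neq0 al0)) ler_pM2l.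
have ln_at : ln (1 + tau) <= ln (1 + al^-1) + ln (al * tau).
  have ial0 : 0 < al^-1 by rewrite invr_gt0.
  rewrite -lnM ?posrE ?mulr_gt0 ?addr_gt0 // ler_ln ?posrE ?mulr_gt0 ?addr_gt0 //.
  by rewrite mulrDl mul1r mulrA mulVf ?gt_eqF // mul1r lerD2r.
have ln_at_le : ln (al * tau) <= al * tau.
  by apply/ltW/ln_sublinear; rewrite mulr_gt0.
have -> : ln (1 + tau) - (tau - al) / (1 + tau) * ln (al * tau)
          = ln (1 + tau) - ln (al * tau) + ln (al * tau) * (1 + al) / (1 + tau).
  by field; rewrite gt_eqF ?addr_gt0.
have : ln (al * tau) * (1 + al) / (1 + tau) <= al * (1 + al).
  rewrite ler_pdivrMr ?addr_gt0 // mulrAC ler_pM2r ?addr_gt0 //.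
  by apply: le_trans ln_at_le _; rewrite mulrDr mulr1 lerDr ltW.
lra.
Qed.

Lemma ln1D_max_le_lfun (al : R) : 0 < al -> ln (1 + Num.max al al^-1) <= lfun al.
Proof.
move=> al0; apply: ub_le_sup.
  exists (ln (1 + al^-1) + al * (1 + al)) => _ [tau [al_tau ->]].
  exact: lfun_term_le.
exists (Num.max al al^-1); split => //.
have [al_le|ial_lt] := lerP al al^-1.
- by rewrite mulfV ?gt_eqF // ln1 mulr0 subr0.
- by rewrite subrr mul0r mul0r subr0.
Qed.

Lemma one_add_max_inv (a b : R) : 0 < a -> a < b ->
  1 + Num.max (a / (b - a)) (a / (b - a))^-1 = b / Num.min a (b - a).
Proof.
move=> a0 ab; have ba0 : b - a != 0 by rewrite gt_eqF ?subr_gt0.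
rewrite invf_div; have [a_le|ba_lt] := lerP a (b - a).
- rewrite (max_idPr _); first by field; rewrite gt_eqF.
  rewrite ler_pdivrMr ?subr_gt0 // mulrAC ler_pdivlMr ?subr_gt0 //; nra.
- rewrite (max_idPl _); first by field.
  rewrite ler_pdivrMr // mulrAC ler_pdivlMr ?subr_gt0 //; nra.
Qed.

Lemma ln_Dconst_ge (a b : R) : 0 < a -> a < b ->
  3/2 * ln (b / (b - a)) + 3/2 * ln (b / Num.min a (b - a)) <= ln (Dconst a b).
Proof.
move=> a0 ab; have ba0 : 0 < b - a by rewrite subr_gt0.
have b0 : 0 < b := lt_trans a0 ab.
rewrite /Dconst [X in _ <= X]lnM ?posrE ?powR_gt0 ?expR_gt0 ?divr_gt0 //.
rewrite ln_powR expRK.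
rewrite lerD2l ler_pM2l // -one_add_max_inv //.
by apply: ln1D_max_le_lfun; rewrite divr_gt0.
Qed.

Lemma ln_min_ratio_ge (a b : R) : 0 < a -> a < b ->
  ln (b / (b - a)) <= ln (b / Num.min a (b - a)) /\
  ln (b / a) <= ln (b / Num.min a (b - a)).
Proof.
move=> a0 ab; have ba0 : 0 < b - a by rewrite subr_gt0.
have b0 : 0 < b := lt_trans a0 ab.
have m0 : 0 < Num.min a (b - a) by rewrite lt_min a0.
rewrite !ler_ln ?posrE ?divr_gt0 // !ler_pM2l // !lef_pV2 ?posrE //.
by rewrite !ge_min !lexx orbT.
Qed.

Lemma ln_2b_sub_le (a b : R) : 0 < a -> a < b ->
  3/2 * ln ((2 * b - a) / b) <= ln (b / Num.min a (b - a)).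
Proof.
move=> a0 ab; have b0 : 0 < b := lt_trans a0 ab.
set m := Num.min a (b - a).
have m0 : 0 < m by rewrite lt_min a0 subr_gt0.
have m_le_a : m <= a by rewrite ge_min lexx.
have two_m : 2 * m <= b.
  have : m <= b - a by rewrite ge_min lexx orbT.
  lra.
have r0 : 0 < (2 * b - a) / b by rewrite divr_gt0 //; lra.
have bm0 : 0 < b / m by rewrite divr_gt0.
have le_pow : ((2 * b - a) / b) ^+ 3 <= (b / m) ^+ 2.
  apply: le_trans (_ : ((2 * b - m) / b) ^+ 3 <= _).
    have le : (2 * b - a) / b <= (2 * b - m) / b by rewrite ler_pM2r ?invr_gt0 //; lra.
    have r1 := lt_le_trans r0 le.
    by rewrite lerXn2r // nnegrE ltW.
  rewrite !expr_div_n ler_pdivrMr ?exprn_gt0 // mulrAC ler_pdivlMr ?exprn_gt0 //.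
  by rewrite -exprD; exact: expr3_subr_le (ltW m0) two_m.
have := le_pow; rewrite -ler_ln ?posrE ?exprn_gt0 // (lnXn _ r0) (lnXn _ bm0).
lra.
Qed.

End Constant.

Section LogRatio.
Variables (R : realType) (lam delta a b h k X Y : R).
Hypotheses (a_gt0 : 0 < a) (lt_ab : a < b) (h_gt0 : 0 < h) (k_gt0 : 0 < k)
  (X_gt0 : 0 < X) (Y_gt0 : 0 < Y).

Let Q := p_exponent lam delta.
Let L := lrho lam delta.
Let log_ratio1 := L b h X + L a k Y - L (b - a) h X - L a (h + k) (X + Y).
Let log_ratio2 := L b h X - L a (h + k) (X + Y).
Let lm := ln (b / Num.min a (b - a)).

Let b_gt0 : 0 < b := lt_trans a_gt0 lt_ab.
Let ba_gt0 : 0 < b - a. Proof. by rewrite subr_gt0. Qed.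
Let hk_gt0 : 0 < h + k. Proof. exact: addr_gt0. Qed.
Let XY_gt0 : 0 < X + Y. Proof. exact: addr_gt0. Qed.
Let b2a_gt0 : 0 < 2 * b - a.
Proof. by rewrite (_ : 2 * b - a = b + (b - a)) ?(addr_gt0 b_gt0 ba_gt0) //; ring. Qed.

Lemma log_ratio1E :
  log_ratio1 = ln (b / (b - a)) / 2 + ln (k / (h + k)) + 3/2 * ln ((X + Y) / Y)
  - a * (Q h X + Q k Y - Q (h + k) (X + Y)).
Proof. by rewrite /log_ratio1 /L /lrho !ln_div ?posrE //; rewrite /Q; ring. Qed.

Lemma log_ratio2E :
  log_ratio2 = ln (b / a) / 2 + ln (h / (h + k)) + 3/2 * ln ((X + Y) / X)
  - (b * Q h X - a * Q (h + k) (X + Y)).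
Proof. by rewrite /log_ratio2 /L /lrho !ln_div ?posrE //; rewrite /Q; ring. Qed.

Lemma log_ratio1_le : (b - a) * X <= a * Y -> log_ratio1 <= 2 * ln (b / (b - a)).
Proof.
move=> XY_le; rewrite log_ratio1E.
have ln_k : ln (k / (h + k)) <= 0.
  by apply: ln_le0; rewrite ler_pdivrMr // mul1r lerDr ltW.
have ln_XY : ln ((X + Y) / Y) <= ln (b / (b - a)).
  rewrite ler_ln ?posrE ?divr_gt0 // ler_pdivrMr // mulrAC ler_pdivlMr //; nra.
have gap : 0 <= a * (Q h X + Q k Y - Q (h + k) (X + Y)).
  by rewrite (mulr_ge0 (ltW a_gt0)) // subr_ge0 p_exponent_subadd.
lra.
Qed.

Let w := b * Y / ((b - a) * (X + Y)).

Let w_ge0 : 0 <= w. Proof. by rewrite divr_ge0 ?mulr_ge0 ?ltW. Qed.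

Let w_lt1 : a * Y < (b - a) * X -> w < 1.
Proof. by move=> XY_lt; rewrite ltr_pdivrMr ?mulr_gt0 // mul1r; nra. Qed.

Lemma log_ratio_convex_le : a * Y < (b - a) * X ->
  w * log_ratio1 + (1 - w) * log_ratio2 <= 3/2 * ln (b / (b - a)) + 3/2 * lm.
Proof.
move=> XY_lt; have w1 : 0 < 1 - w by rewrite subr_gt0 w_lt1.
have [ln_r1 ln_r2] := ln_min_ratio_ge a_gt0 lt_ab.
have ln_r : w * ln (b / (b - a)) + (1 - w) * ln (b / a) <= lm.
  have := lerD (ler_wpM2l w_ge0 ln_r1) (ler_wpM2l (ltW w1) ln_r2).
  by rewrite -mulrDl [w + _]addrC subrK mul1r.
have ln_hk : w * ln (k / (h + k)) + (1 - w) * ln (h / (h + k)) <= 0.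
  have ln_k : ln (k / (h + k)) <= 0.
    by rewrite ln_le0 // ler_pdivrMr // mul1r lerDr ltW.
  have ln_h : ln (h / (h + k)) <= 0.
    by rewrite ln_le0 // ler_pdivrMr // mul1r lerDl ltW.
  have := mulr_ge0_le0 w_ge0 ln_k; have := mulr_ge0_le0 (ltW w1) ln_h; lra.
have ln_XY : w * ln ((X + Y) / Y) + (1 - w) * ln ((X + Y) / X)
             <= ln ((2 * b - a) / (b - a)).
  have pY : 0 < (X + Y) / Y by rewrite divr_gt0.
  have pX : 0 < (X + Y) / X by rewrite divr_gt0.
  apply: le_trans (ln_convex_comb w_ge0 (ltW (w_lt1 XY_lt)) pY pX) _.
  have pos := ltr_wpDl (mulr_ge0 w_ge0 (ltW pY)) (mulr_gt0 w1 pX).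
  rewrite ler_ln ?posrE ?divr_gt0 //.
  have -> : w * ((X + Y) / Y) + (1 - w) * ((X + Y) / X)
            = (2 * b - a) / (b - a) - a * Y / ((b - a) * X).
    by rewrite /w; field; rewrite !gt_eqF.
  by rewrite lerBlDr lerDl divr_ge0 ?mulr_ge0 ?ltW.
have quad : 0 <= w * (a * (Q h X + Q k Y - Q (h + k) (X + Y)))
                 + (1 - w) * (b * Q h X - a * Q (h + k) (X + Y)).
  have -> : w * (a * (Q h X + Q k Y - Q (h + k) (X + Y)))
            + (1 - w) * (b * Q h X - a * Q (h + k) (X + Y))
          = (b * X * Q h X + a * b / (b - a) * Y * Q k Y
             - a * (X + Y) * Q (h + k) (X + Y)) / (X + Y).
    by rewrite /w; field; rewrite !gt_eqF.
  by rewrite divr_ge0 ?(ltW XY_gt0) // subr_ge0 p_exponent_weighted.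
have ln_2b : ln ((2 * b - a) / (b - a)) = ln (b / (b - a)) + ln ((2 * b - a) / b).
  by rewrite !ln_div ?posrE //; ring.
have cube := ln_2b_sub_le a_gt0 lt_ab.
have -> : w * log_ratio1 + (1 - w) * log_ratio2
  = (w * ln (b / (b - a)) + (1 - w) * ln (b / a)) / 2
    + (w * ln (k / (h + k)) + (1 - w) * ln (h / (h + k)))
    + 3/2 * (w * ln ((X + Y) / Y) + (1 - w) * ln ((X + Y) / X))
    - (w * (a * (Q h X + Q k Y - Q (h + k) (X + Y)))
       + (1 - w) * (b * Q h X - a * Q (h + k) (X + Y))).
  by rewrite log_ratio1E log_ratio2E; ring.
rewrite /lm in ln_r cube *; lra.
Qed.

Lemma lrho_ratio_le :
  log_ratio1 <= 3/2 * ln (b / (b - a)) + 3/2 * lm \/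
  log_ratio2 <= 3/2 * ln (b / (b - a)) + 3/2 * lm.
Proof.
have [ln_r1 _] := ln_min_ratio_ge a_gt0 lt_ab.
have ln_r1_ge0 : 0 <= ln (b / (b - a)).
  by rewrite ln_ge0 // ler_pdivlMr // mul1r gerBl ltW.
have [XY_le|XY_lt] := lerP ((b - a) * X) (a * Y).
  by left; have := log_ratio1_le XY_le; rewrite /lm; lra.
have conv := log_ratio_convex_le XY_lt.
set lD := 3/2 * ln (b / (b - a)) + 3/2 * lm in conv *.
have [ratio1_le|ratio1_gt] := lerP log_ratio1 lD; [by left | right].
have w_ratio1 := ler_wpM2l w_ge0 (ltW ratio1_gt).
have w1 : 0 < 1 - w by rewrite subr_gt0 w_lt1.
rewrite -(ler_pM2l w1); lra.
Qed.

End LogRatio.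

Lemma ln_rho_ratio_le (R : realType) (lam delta a b s u t x z y : R) :
  0 < delta -> 0 < a -> a < b -> s < u -> u < t -> x < z -> z < y ->
  let P1 := rho lam delta b s x u z in let P2 := rho lam delta a u z t y in
  let P3 := rho lam delta (b - a) s x u z in let P4 := rho lam delta a s x t y in
  ln P1 + ln P2 - ln P3 - ln P4 <= ln (Dconst a b) \/ ln P1 - ln P4 <= ln (Dconst a b).
Proof.
move=> delta0 a0 ab su ut xz zy P1 P2 P3 P4.
have b0 : 0 < b := lt_trans a0 ab.
have ba0 : 0 < b - a by rewrite subr_gt0.
have lnD := ln_Dconst_ge a0 ab.
have -> : ln P4 = ln (powR (4 * pi) (- (1/2)) * delta)
                  + lrho lam delta a ((u - s) + (t - u)) ((z - x) + (y - z)).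
  rewrite ln_rho ?(lt_trans su ut) ?(lt_trans xz zy) //.
  by congr (_ + lrho _ _ _ _ _); ring.
rewrite /P1 /P2 /P3 !ln_rho //.
have := @lrho_ratio_le R lam delta a b (u - s) (t - u) (z - x) (y - z).
rewrite !subr_gt0 => /(_ a0 ab su ut xz zy) [le1|le2]; [left | right]; lra.
Qed.

Theorem theorem2p2 (R : realType) (lam delta a b s u t x z y : R) :
  0 <= lam -> 0 < delta -> 0 < a -> a < b ->
  s < u -> u < t -> x < z -> z < y ->
  rho lam delta b s x u z * rho lam delta a u z t y <=
  Dconst a b * Num.max (rho lam delta (b - a) s x u z) (rho lam delta a u z t y)
    * rho lam delta a s x t y.
Proof.
move=> _ delta0 a0 ab su ut xz zy.
have st := lt_trans su ut; have xy := lt_trans xz zy.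
have b0 : 0 < b := lt_trans a0 ab; have ba0 : 0 < b - a by rewrite subr_gt0.
have D0 : 0 < Dconst a b by rewrite mulr_gt0 ?powR_gt0 ?expR_gt0 ?divr_gt0.
have := ln_rho_ratio_le lam delta0 a0 ab su ut xz zy => /=.
set P1 := rho lam delta b s x u z; set P2 := rho lam delta a u z t y.
set P3 := rho lam delta (b - a) s x u z; set P4 := rho lam delta a s x t y.
have [P1_gt0 P2_gt0 P3_gt0 P4_gt0] : [/\ 0 < P1, 0 < P2, 0 < P3 & 0 < P4].
  by split; apply: rho_gt0.
rewrite -mulrA; case=> [le1|le2].
- apply: le_trans (_ : P1 * P2 <= Dconst a b * (P3 * P4)) _.
    apply: le_mul_of_ln_sub (mulr_gt0 P1_gt0 P2_gt0) (mulr_gt0 P3_gt0 P4_gt0) D0 _.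
    by rewrite [ln (P1 * P2)]lnM ?posrE // [ln (P3 * P4)]lnM ?posrE //; lra.
  by rewrite ler_pM2l // ler_pM2r // le_max lexx.
- apply: le_trans (_ : P1 * P2 <= Dconst a b * (P2 * P4)) _.
    by rewrite [P1 * P2]mulrC mulrCA ler_pM2l // le_mul_of_ln_sub.
  by rewrite ler_pM2l // ler_pM2r // le_max lexx orbT.
Qed.
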